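(* Let $\mathcal{A}$ be a complex Banach algebra with identity, $\lambda$ a nonzero complex number, and $M = \begin{pmatrix} A & B \\ C & D \end{pmatrix} \in M_2(\mathcal{A})$ with $A, D \in \mathcal{A}^d$. If $$BD = \lambda A B D^\pi,\quad CA = \lambda D C A^\pi,\quad BC = 0,$$ then $M \in M_2(\mathcal{A})^d$ and $$M^d = \begin{pmatrix} A^d & 0 \\ 0 & D^d \end{pmatrix} + \sum_{n=0}^{\infty} (P^d)^{n+2} Q M^n,$$ where $P = \begin{pmatrix} A & 0 \\ 0 & D \end{pmatrix}$, $P^d = \begin{pmatrix} A^d & 0 \\ 0 & D^d \end{pmatrix}$ and $Q = \begin{pmatrix} 0 & B \\ C & 0 \end{pmatrix}$.
   Context: $M_2(\mathcal{A})$ is the Banach algebra of $2\times 2$ matrices over $\mathcal{A}$. An element $x$ of a Banach algebra has a generalized Drazin (g-Drazin) inverse $x^d$ if $x^d$ commutes with $x$, $x^d = x^dxx^d$ and $x - x^2x^d$ is quasinilpotent (i.e. $\lim\|y^n\|^{1/n}=0$ for $y=x-x^2x^d$); $\mathcal{A}^d$ (resp. $M_2(\mathcal{A})^d$) denotes the set of g-Drazin invertible elements. The spectral idempotent is $x^\pi = 1 - xx^d$. *)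

From Stdlib Require Import Reals.
Open Scope R_scope.

Record Cpx := mkC { Re : R ; Im : R }.
Definition C0 : Cpx := mkC 0 0.
Definition C1 : Cpx := mkC 1 0.
Definition Cadd (a b : Cpx) : Cpx := mkC (Re a + Re b) (Im a + Im b).
Definition Cmul (a b : Cpx) : Cpx :=
  mkC (Re a * Re b - Im a * Im b) (Re a * Im b + Im a * Re b).
Definition Cmod (a : Cpx) : R := sqrt (Re a ^ 2 + Im a ^ 2).

Record BanachAlg := {
  carrier :> Type;
  zero : carrier;
  one : carrier;
  add : carrier -> carrier -> carrier;
  opp : carrier -> carrier;
  mul : carrier -> carrier -> carrier;
  scal : Cpx -> carrier -> carrier;
  norm : carrier -> R;
  add_assoc : forall x y z, add x (add y z) = add (add x y) z;
  add_comm : forall x y, add x y = add y x;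
  add_zero_l : forall x, add zero x = x;
  add_opp_l : forall x, add (opp x) x = zero;
  mul_assoc : forall x y z, mul x (mul y z) = mul (mul x y) z;
  mul_one_l : forall x, mul one x = x;
  mul_one_r : forall x, mul x one = x;
  mul_add_l : forall x y z, mul (add x y) z = add (mul x z) (mul y z);
  mul_add_r : forall x y z, mul x (add y z) = add (mul x y) (mul x z);
  scal_add_c : forall a b x, scal (Cadd a b) x = add (scal a x) (scal b x);
  scal_add_x : forall a x y, scal a (add x y) = add (scal a x) (scal a y);
  scal_mul_c : forall a b x, scal (Cmul a b) x = scal a (scal b x);
  scal_one : forall x, scal C1 x = x;
  scal_mul_l : forall a x y, mul (scal a x) y = scal a (mul x y);
  scal_mul_r : forall a x y, mul x (scal a y) = scal a (mul x y);
  norm_nonneg : forall x, 0 <= norm x;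
  norm_eq0 : forall x, norm x = 0 -> x = zero;
  norm_triangle : forall x y, norm (add x y) <= norm x + norm y;
  norm_scal : forall a x, norm (scal a x) = Cmod a * norm x;
  norm_submult : forall x y, norm (mul x y) <= norm x * norm y;
  norm_one : norm one = 1;
  complete : forall u : nat -> carrier,
    (forall eps, eps > 0 -> exists N, forall n m, (n >= N)%nat -> (m >= N)%nat ->
        norm (add (u n) (opp (u m))) < eps) ->
    exists l, Un_cv (fun n => norm (add (u n) (opp l))) 0
}.

Arguments zero {_}. Arguments one {_}. Arguments add {_}. Arguments opp {_}.
Arguments mul {_}. Arguments scal {_}. Arguments norm {_}.

Fixpoint gpow {T : Type} (mulT : T -> T -> T) (oneT : T) (x : T) (n : nat) : T :=
  match n with O => oneT | S k => mulT x (gpow mulT oneT x k) end.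

Definition nroot (t : R) (n : nat) : R :=
  if Rle_dec t 0 then 0 else Rpower t (/ INR n).

Definition quasinil {T : Type} (mulT : T -> T -> T) (oneT : T) (normT : T -> R)
  (y : T) : Prop :=
  Un_cv (fun n => nroot (normT (gpow mulT oneT y n)) n) 0.

Definition is_gdrazin {T : Type} (addT : T -> T -> T) (oppT : T -> T)
  (mulT : T -> T -> T) (oneT : T) (normT : T -> R) (x xd : T) : Prop :=
  mulT xd x = mulT x xd /\
  mulT (mulT xd x) xd = xd /\
  quasinil mulT oneT normT (addT x (oppT (mulT (mulT x x) xd))).

Section M2.
Variable X : BanachAlg.

Record M2 := mkM2 { m11 : X ; m12 : X ; m21 : X ; m22 : X }.

Definition m2add (M N : M2) : M2 :=
  mkM2 (add (m11 M) (m11 N)) (add (m12 M) (m12 N))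
       (add (m21 M) (m21 N)) (add (m22 M) (m22 N)).
Definition m2opp (M : M2) : M2 :=
  mkM2 (opp (m11 M)) (opp (m12 M)) (opp (m21 M)) (opp (m22 M)).
Definition m2mul (M N : M2) : M2 :=
  mkM2 (add (mul (m11 M) (m11 N)) (mul (m12 M) (m21 N)))
       (add (mul (m11 M) (m12 N)) (mul (m12 M) (m22 N)))
       (add (mul (m21 M) (m11 N)) (mul (m22 M) (m21 N)))
       (add (mul (m21 M) (m12 N)) (mul (m22 M) (m22 N))).
Definition m2zero : M2 := mkM2 zero zero zero zero.
Definition m2one : M2 := mkM2 one zero zero one.
(* Banach algebra norm on M_2(A): maximal row sum of entry norms
   (submultiplicative; equivalent to every other standard choice) *)
Definition m2norm (M : M2) : R :=
  Rmax (norm (m11 M) + norm (m12 M)) (norm (m21 M) + norm (m22 M)).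

Definition m2pow (M : M2) (n : nat) : M2 := gpow m2mul m2one M n.

Definition m2_gdrazin (M Md : M2) : Prop :=
  is_gdrazin m2add m2opp m2mul m2one m2norm M Md.

Fixpoint m2partial (u : nat -> M2) (n : nat) : M2 :=
  match n with O => u O | S k => m2add (m2partial u k) (u (S k)) end.

Definition m2_series (u : nat -> M2) (S : M2) : Prop :=
  Un_cv (fun n => m2norm (m2add (m2partial u n) (m2opp S))) 0.
End M2.

Arguments mkM2 {X}. Arguments m2add {X}. Arguments m2opp {X}. Arguments m2mul {X}.
Arguments m2one {X}. Arguments m2norm {X}. Arguments m2pow {X}.
Arguments m2_gdrazin {X}. Arguments m2_series {X}.

Definition gdrazin_in (X : BanachAlg) (x xd : X) : Prop :=
  is_gdrazin add opp mul one norm x xd.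

Definition spec_idem (X : BanachAlg) (x xd : X) : X := add one (opp (mul x xd)).

From Pilot Require Import Defs.
From Stdlib Require Import Reals Lra Lia.
Open Scope R_scope.

(* The hypotheses force A^d B = 0 and D^d C = 0: iterating BD = lam A B D^pi gives
   lam^n A^d B = (A^d)^(n+1) B (D D^pi)^n, whose norm decays faster than any geometric
   sequence, so A^d B = 0.  Hence P^d Q = Q P^d = 0, the series vanishes termwise, and
   P^d is a g-Drazin inverse of M = P + Q as soon as M - M^2 P^d = P' + Q is
   quasinilpotent, where P' = P - P^2 P^d.  Now Q P' = lam P' Q and Q^3 = 0, so
   (P' + Q)^(n+2) = P'^n R_n with ||R_n|| growing at most geometrically, and the
   quasinilpotence of P' is inherited by P' + Q.  Both steps hold in any Banach
   algebra, and M_2(A) with the maximal row-sum norm is one. *)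

Arguments add_assoc {_}. Arguments add_comm {_}. Arguments add_zero_l {_}.
Arguments add_opp_l {_}. Arguments mul_assoc {_}. Arguments mul_one_l {_}.
Arguments mul_one_r {_}. Arguments mul_add_l {_}. Arguments mul_add_r {_}.
Arguments scal_add_x {_}. Arguments scal_mul_l {_}. Arguments scal_mul_r {_}.
Arguments norm_nonneg {_}. Arguments norm_eq0 {_}. Arguments norm_triangle {_}.
Arguments norm_scal {_}. Arguments norm_submult {_}.

Notation apow := (gpow mul one).
Notation siter c n := (Nat.iter n (scal c)).

Section Algebra.
Context {X : BanachAlg}.
Implicit Types (x y z : X).

Lemma add_zero_r x : add x zero = x.
Proof. rewrite add_comm; apply add_zero_l. Qed.

Lemma add_opp_r x : add x (opp x) = zero.
Proof. rewrite add_comm; apply add_opp_l. Qed.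

Lemma add_idem_zero x : add x x = x -> x = zero.
Proof.
  intros H. rewrite <- (add_opp_l x). rewrite <- H at 3.
  rewrite add_assoc, add_opp_l, add_zero_l. reflexivity.
Qed.

Lemma mul_zero_l x : mul zero x = zero.
Proof. apply add_idem_zero. rewrite <- mul_add_l, add_zero_l. reflexivity. Qed.

Lemma mul_zero_r x : mul x zero = zero.
Proof. apply add_idem_zero. rewrite <- mul_add_r, add_zero_l. reflexivity. Qed.

Lemma scal_zero c : scal c (zero : X) = zero.
Proof. apply add_idem_zero. rewrite <- scal_add_x, add_zero_l. reflexivity. Qed.

Lemma opp_unique x y : add x y = zero -> opp x = y.
Proof.
  intros H. rewrite <- (add_zero_r (opp x)), <- H, add_assoc, add_opp_l.
  apply add_zero_l.
Qed.

Lemma opp_zero : opp (zero : X) = zero.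
Proof. apply opp_unique, add_zero_l. Qed.

Lemma mul_opp_l x y : mul (opp x) y = opp (mul x y).
Proof. symmetry; apply opp_unique. rewrite <- mul_add_l, add_opp_r. apply mul_zero_l. Qed.

Lemma mul_opp_r x y : mul x (opp y) = opp (mul x y).
Proof. symmetry; apply opp_unique. rewrite <- mul_add_r, add_opp_r. apply mul_zero_r. Qed.

Lemma add_shuffle (a b c d e : X) :
  add (add a (add b c)) (add d e) = add a (add (add b d) (add c e)).
Proof.
  rewrite <- !add_assoc. f_equal. rewrite !add_assoc. f_equal.
  rewrite <- !add_assoc. f_equal. apply add_comm.
Qed.

Lemma Cmod_nonneg a : 0 <= Cmod a.
Proof. apply sqrt_pos. Qed.

Lemma Cmod_pos a : a <> C0 -> 0 < Cmod a.
Proof.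
  destruct a as [r i]; unfold Cmod; simpl; intros Ha. apply sqrt_lt_R0.
  destruct (Req_dec r 0) as [-> | Hr]; [destruct (Req_dec i 0) as [-> | Hi] |].
  - contradiction.
  - pose proof (Rsqr_pos_lt i Hi). unfold Rsqr in *. nra.
  - pose proof (Rsqr_pos_lt r Hr). pose proof (pow2_ge_0 i). unfold Rsqr in *. nra.
Qed.

Lemma norm_zero : norm (zero : X) = 0.
Proof.
  rewrite <- (scal_zero C0), norm_scal. unfold Cmod, C0; simpl.
  replace (0 * (0 * 1) + 0 * (0 * 1)) with 0 by ring. rewrite sqrt_0. ring.
Qed.

Lemma apow_succ_r x n : apow x (S n) = mul (apow x n) x.
Proof.
  induction n as [|n IH]; simpl.
  - rewrite mul_one_l; apply mul_one_r.
  - rewrite IH at 1; apply mul_assoc.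
Qed.

Lemma norm_apow x n : norm (apow x n) <= norm x ^ n.
Proof.
  induction n as [|n IH]; simpl.
  - rewrite norm_one; lra.
  - eapply Rle_trans; [apply norm_submult |].
    apply Rmult_le_compat_l; [apply norm_nonneg | exact IH].
Qed.

Lemma siter_mul_l c n x y : mul (siter c n x) y = siter c n (mul x y).
Proof. induction n as [|n IH]; simpl; [|rewrite scal_mul_l, IH]; reflexivity. Qed.

Lemma siter_mul_r c n x y : mul x (siter c n y) = siter c n (mul x y).
Proof. induction n as [|n IH]; simpl; [|rewrite scal_mul_r, IH]; reflexivity. Qed.

Lemma siter_zero c n : siter c n (zero : X) = zero.
Proof. induction n as [|n IH]; simpl; [|rewrite IH, scal_zero]; reflexivity. Qed.

Lemma norm_siter c n x : norm (siter c n x) = Cmod c ^ n * norm x.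
Proof. induction n as [|n IH]; simpl; [|rewrite norm_scal, IH]; ring. Qed.

End Algebra.

Definition subgeometric (a : nat -> R) : Prop :=
  forall e, 0 < e -> exists N, forall n, (N <= n)%nat -> a n <= e ^ n.

Lemma nroot_cv0_iff_subgeometric (a : nat -> R) :
  (forall n, 0 <= a n) -> Un_cv (fun n => nroot (a n) n) 0 <-> subgeometric a.
Proof.
  intros Ha. unfold nroot, Un_cv, R_dist. split.
  - intros H e He. destruct (H e He) as [N HN]. exists (max N 1). intros n Hn.
    specialize (HN n ltac:(lia)). rewrite Rminus_0_r in HN.
    destruct (Rle_dec (a n) 0) as [Hle | Hgt].
    + pose proof (pow_lt e n He). lra.
    + assert (Hr : 0 < Rpower (a n) (/ INR n)) by apply exp_pos.
      rewrite Rabs_pos_eq in HN by lra.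
      replace (a n) with (Rpower (a n) (/ INR n) ^ n).
      * apply pow_incr; lra.
      * rewrite <- Rpower_pow, Rpower_mult, Rinv_l by (auto; apply not_0_INR; lia).
        apply Rpower_1; lra.
  - intros H e He. destruct (H (e / 2) ltac:(lra)) as [N HN]. exists (max N 1).
    intros n Hn. specialize (HN n ltac:(lia)). rewrite Rminus_0_r.
    destruct (Rle_dec (a n) 0) as [Hle | Hgt].
    + rewrite Rabs_R0; exact He.
    + assert (Hr : 0 < Rpower (a n) (/ INR n)) by apply exp_pos.
      assert (Hn0 : 0 < / INR n) by (apply Rinv_0_lt_compat, lt_0_INR; lia).
      rewrite Rabs_pos_eq by lra.
      assert (Rpower (a n) (/ INR n) <= Rpower ((e / 2) ^ n) (/ INR n))
        by (apply Rle_Rpower_l; lra).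
      rewrite <- Rpower_pow, Rpower_mult, Rinv_r, Rpower_1 in H0 by
        (lra || apply not_0_INR; lia).
      lra.
Qed.

Lemma subgeometric_Rmax (a b : nat -> R) :
  subgeometric a -> subgeometric b -> subgeometric (fun n => Rmax (a n) (b n)).
Proof.
  intros Ha Hb e He. destruct (Ha e He) as [Na HNa], (Hb e He) as [Nb HNb].
  exists (max Na Nb). intros n Hn. apply Rmax_lub; [apply HNa | apply HNb]; lia.
Qed.

Lemma subgeometric_dominated (a b : nat -> R) (k : nat) (K R : R) :
  0 <= K -> 0 <= R -> subgeometric b ->
  (forall n, a (k + n)%nat <= K * R ^ n * b n) -> subgeometric a.
Proof.
  intros HK HR Hb Hab eta Heta.
  set (e := eta / (2 * (R + 1))).
  assert (He : 0 < e) by (apply Rdiv_lt_0_compat; lra).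
  assert (HRe : R * e <= eta / 2).
  { unfold e. apply Rmult_le_reg_r with (2 * (R + 1)); [lra |].
    field_simplify; [nra | lra]. }
  destruct (Hb e He) as [N1 HN1].
  assert (Hk : 0 < eta ^ k / (K + 1)) by (apply Rdiv_lt_0_compat; [apply pow_lt |]; lra).
  destruct (pow_lt_1_zero (/ 2) ltac:(rewrite Rabs_pos_eq; lra) _ Hk) as [N2 HN2].
  exists (k + max N1 N2)%nat. intros n Hn.
  replace n with (k + (n - k))%nat by lia. set (m := (n - k)%nat).
  specialize (HN2 m ltac:(lia)). rewrite Rabs_pos_eq in HN2 by (apply pow_le; lra).
  assert (Hsmall : K * (/ 2) ^ m <= eta ^ k).
  { apply Rle_trans with ((K + 1) * (/ 2) ^ m).
    - pose proof (pow_le (/ 2) m ltac:(lra)). nra.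
    - apply Rmult_lt_compat_l with (r := K + 1) in HN2; [| lra].
      replace ((K + 1) * (eta ^ k / (K + 1))) with (eta ^ k) in HN2 by (field; lra).
      lra. }
  eapply Rle_trans; [apply Hab |].
  apply Rle_trans with (K * (R * e) ^ m).
  { rewrite Rpow_mult_distr, Rmult_assoc. apply Rmult_le_compat_l; [lra |].
    apply Rmult_le_compat_l; [apply pow_le; lra | apply HN1; lia]. }
  apply Rle_trans with (K * (/ 2) ^ m * eta ^ m).
  { rewrite Rmult_assoc, <- Rpow_mult_distr. apply Rmult_le_compat_l; [lra |].
    apply pow_incr. pose proof (Rmult_le_pos R e HR (Rlt_le _ _ He)). lra. }
  rewrite pow_add. apply Rmult_le_compat_r; [apply pow_le; lra | exact Hsmall].
Qed.

Lemma subgeometric_const (z : R) : 0 <= z -> subgeometric (fun _ => z) -> z = 0.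
Proof.
  intros Hz H. destruct (Req_dec z 0) as [| Hnz]; [assumption | exfalso].
  destruct (H (/ 2) ltac:(lra)) as [N1 HN1].
  destruct (pow_lt_1_zero (/ 2) ltac:(rewrite Rabs_pos_eq; lra) z ltac:(lra)) as [N2 HN2].
  specialize (HN1 (max N1 N2) ltac:(lia)). specialize (HN2 (max N1 N2) ltac:(lia)).
  rewrite Rabs_pos_eq in HN2 by (apply pow_le; lra). lra.
Qed.

Lemma quasinilE {X : BanachAlg} (y : X) :
  quasinil mul one norm y <-> subgeometric (fun n => norm (apow y n)).
Proof. apply nroot_cv0_iff_subgeometric. intros; apply norm_nonneg. Qed.

Section SkewPerturbation.
Context {X : BanachAlg}.
Variables (p q : X) (c : Cpx).
Hypothesis q_p : mul q p = scal c (mul p q).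
Hypothesis q3 : mul q (mul q q) = zero.

Lemma mul_apow_skew n : mul q (apow p n) = mul (apow p n) (siter c n q).
Proof.
  induction n as [|n IH]; simpl.
  - rewrite mul_one_r; symmetry; apply mul_one_l.
  - rewrite mul_assoc, q_p, scal_mul_l, <- mul_assoc, IH, mul_assoc, scal_mul_r.
    reflexivity.
Qed.

Lemma mul_apow_skew_l n x : mul q (mul (apow p n) x) = mul (apow p n) (siter c n (mul q x)).
Proof. rewrite mul_assoc, mul_apow_skew, <- mul_assoc, siter_mul_l. reflexivity. Qed.

Let T := 2 * Rmax 1 (Cmod c).

Lemma T_ge_2 : 2 <= T.
Proof. pose proof (Rmax_l 1 (Cmod c)). unfold T; lra. Qed.

Lemma Cmod_pow_le_T k : Cmod c ^ k <= T ^ k.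
Proof.
  apply pow_incr. split; [apply Cmod_nonneg |].
  pose proof (Rmax_r 1 (Cmod c)). pose proof (Rmax_l 1 (Cmod c)). unfold T; lra.
Qed.

(* Since [q] moves to the right of powers of [p] and [q^3 = 0], the expansion of
   [(p + q)^(n+2)] collapses to three terms [p^(n+2-j) w_j] with
   [||w_j|| <= (T^(n+2) ||q||)^j]. *)
Definition skew_expansion n (u v : X) : Prop :=
  apow (add p q) (S (S n)) =
    add (apow p (S (S n))) (add (mul (apow p (S n)) u) (mul (apow p n) v)) /\
  mul q v = zero /\ mul q (mul q u) = zero /\
  norm u <= T ^ S (S n) * norm q /\ norm v <= (T ^ S (S n) * norm q) ^ 2.

Lemma skew_expansion_0 : skew_expansion 0 (add q (scal c q)) (mul q q).
Proof.
  pose proof T_ge_2. pose proof (norm_nonneg q) as Hq.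
  split; [| split; [| split; [| split]]].
  - simpl. rewrite !mul_one_r, mul_one_l, !mul_add_l, !mul_add_r, q_p, scal_mul_r.
    rewrite !add_assoc. reflexivity.
  - exact q3.
  - rewrite mul_add_r, !scal_mul_r, mul_add_r, scal_mul_r, q3, scal_zero.
    apply add_zero_r.
  - eapply Rle_trans; [apply norm_triangle |]. rewrite norm_scal.
    pose proof (Cmod_pow_le_T 1) as Hc1. rewrite !pow_1 in Hc1.
    assert (Cmod c * norm q <= T * norm q) by (apply Rmult_le_compat_r; auto).
    assert (2 * T * norm q <= T ^ 2 * norm q) by (apply Rmult_le_compat_r; nra).
    nra.
  - eapply Rle_trans; [apply norm_submult |].
    assert (norm q <= T ^ 2 * norm q)
      by (rewrite <- (Rmult_1_l (norm q)) at 1; apply Rmult_le_compat_r; nra).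
    nra.
Qed.

Lemma skew_expansion_succ n u v : skew_expansion n u v ->
  skew_expansion (S n) (add u (siter c (S (S n)) q)) (add v (siter c (S n) (mul q u))).
Proof.
  intros [E [Hv [Hu [Bu Bv]]]].
  pose proof T_ge_2. pose proof (norm_nonneg q) as Hq.
  set (t := T ^ S (S n) * norm q) in *.
  assert (Ht : 0 <= t) by (apply Rmult_le_pos; [apply pow_le |]; lra).
  assert (Ht' : T ^ S (S (S n)) * norm q = T * t) by (unfold t; simpl; ring).
  split; [| split; [| split; [| split]]].
  - change (apow (add p q) (S (S (S n)))) with (mul (add p q) (apow (add p q) (S (S n)))).
    rewrite E, mul_add_l, !mul_add_r, !mul_apow_skew_l, mul_apow_skew, Hv,
      siter_zero, mul_zero_r, add_zero_r, !mul_assoc.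
    apply add_shuffle.
  - rewrite mul_add_r, Hv, siter_mul_r, Hu, siter_zero. apply add_zero_l.
  - rewrite !mul_add_r, Hu, !siter_mul_r, q3, siter_zero. apply add_zero_l.
  - eapply Rle_trans; [apply norm_triangle |]. rewrite norm_siter, Ht'.
    pose proof (Cmod_pow_le_T (S (S n))). unfold t in *. nra.
  - eapply Rle_trans; [apply norm_triangle |]. rewrite norm_siter, Ht'.
    pose proof (norm_submult q u). pose proof (norm_nonneg u).
    assert (Cmod c ^ S n <= T ^ S (S n))
      by (apply Rle_trans with (T ^ S n); [apply Cmod_pow_le_T | apply Rle_pow; lia || lra]).
    assert (Cmod c ^ S n * (norm q * norm u) <= t * t).
    { replace (t * t) with (T ^ S (S n) * (norm q * t)) by (unfold t; ring).
      apply Rmult_le_compat; [apply pow_le, Cmod_nonneg | | auto |].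
      - apply Rmult_le_pos; auto.
      - apply Rmult_le_compat_l; auto. }
    assert (2 * t ^ 2 <= (T * t) ^ 2)
      by (rewrite Rpow_mult_distr; apply Rmult_le_compat_r; [apply pow2_ge_0 | nra]).
    assert (Cmod c ^ S n * norm (mul q u) <= Cmod c ^ S n * (norm q * norm u))
      by (apply Rmult_le_compat_l; [apply pow_le, Cmod_nonneg | auto]).
    nra.
Qed.

Lemma skew_expansion_exists n : exists u v, skew_expansion n u v.
Proof.
  induction n as [|n [u [v IH]]].
  - exists (add q (scal c q)), (mul q q). exact skew_expansion_0.
  - eexists; eexists. exact (skew_expansion_succ n u v IH).
Qed.

Hypothesis p_qnil : quasinil mul one norm p.

Lemma quasinil_add_skew : quasinil mul one norm (add p q).
Proof.
  apply quasinilE. apply quasinilE in p_qnil.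
  assert (HT1 : 1 <= T) by (pose proof T_ge_2; lra).
  pose proof (norm_nonneg p) as Hp; pose proof (norm_nonneg q) as Hq.
  apply (subgeometric_dominated _ (fun n => norm (apow p n)) 2
           (T ^ 4 * (norm p + norm q) ^ 2) (T ^ 2));
    [apply Rmult_le_pos; apply pow_le; lra | apply pow_le; lra | exact p_qnil |].
  intros n. destruct (skew_expansion_exists n) as [u [v [E [_ [_ [Bu Bv]]]]]].
  simpl plus. rewrite E, !apow_succ_r.
  set (t := T ^ S (S n) * norm q) in *.
  replace (add (mul (mul (apow p n) p) p) (add (mul (mul (apow p n) p) u) (mul (apow p n) v)))
    with (mul (apow p n) (add (mul p p) (add (mul p u) v)))
    by (rewrite !mul_add_r, !mul_assoc; reflexivity).
  pose proof (norm_nonneg (apow p n)). pose proof (norm_nonneg u).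
  assert (Hsum : norm (add (mul p p) (add (mul p u) v)) <= (norm p + t) ^ 2).
  { pose proof (norm_triangle (mul p p) (add (mul p u) v)).
    pose proof (norm_triangle (mul p u) v).
    pose proof (norm_submult p p). pose proof (norm_submult p u). nra. }
  assert (HTn : 1 <= T ^ S (S n)) by (rewrite <- (pow1 (S (S n))); apply pow_incr; lra).
  assert (Hbase : (norm p + t) ^ 2 <= T ^ 4 * (norm p + norm q) ^ 2 * (T ^ 2) ^ n).
  { replace (T ^ 4 * (norm p + norm q) ^ 2 * (T ^ 2) ^ n)
      with ((T ^ S (S n) * (norm p + norm q)) ^ 2)
      by (rewrite <- pow_mult, Nat.mul_comm, pow_mult; simpl; ring).
    apply pow_incr. unfold t. nra. }
  eapply Rle_trans; [apply norm_submult |]. nra.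
Qed.

End SkewPerturbation.

Definition drazin_residual {X : BanachAlg} (x xd : X) : X :=
  add x (opp (mul (mul x x) xd)).

Lemma gdrazin_add_skew {X : BanachAlg} (p q pd : X) (c : Cpx) :
  gdrazin_in X p pd -> mul pd q = zero -> mul q pd = zero ->
  mul q (drazin_residual p pd) = scal c (mul (drazin_residual p pd) q) ->
  mul q (mul q q) = zero ->
  gdrazin_in X (add p q) pd.
Proof.
  intros [Hcomm [Hidem Hqnil]] Hpdq Hqpd Hskew Hq3.
  assert (Hl : mul pd (add p q) = mul pd p) by (rewrite mul_add_r, Hpdq; apply add_zero_r).
  assert (Hr : mul (add p q) pd = mul p pd) by (rewrite mul_add_l, Hqpd; apply add_zero_r).
  assert (Hqppd : mul q (mul p pd) = zero)
    by (rewrite <- Hcomm, mul_assoc, Hqpd; apply mul_zero_l).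
  split; [| split].
  - rewrite Hl, Hr; exact Hcomm.
  - rewrite Hl; exact Hidem.
  - replace (add (add p q) (opp (mul (mul (add p q) (add p q)) pd)))
      with (add (drazin_residual p pd) q).
    + exact (quasinil_add_skew _ _ c Hskew Hq3 Hqnil).
    + rewrite <- mul_assoc, Hr, mul_add_l, Hqppd, add_zero_r, mul_assoc.
      unfold drazin_residual. rewrite <- !add_assoc, (add_comm q). reflexivity.
Qed.

Lemma gdrazin_apow_mul {X : BanachAlg} (x xd : X) n :
  gdrazin_in X x xd -> mul (apow xd (S n)) (apow x n) = xd.
Proof.
  intros [Hcomm [Hidem _]].
  assert (E : mul xd (mul xd x) = xd) by (rewrite Hcomm, mul_assoc; exact Hidem).
  induction n as [|n IH].
  - simpl. rewrite !mul_one_r. reflexivity.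
  - rewrite (apow_succ_r xd (S n)), apow_succ_r. simpl apow at 2.
    rewrite mul_assoc, <- (mul_assoc _ xd x), <- (mul_assoc (apow xd n)), E, <- apow_succ_r.
    exact IH.
Qed.

Section IntertwiningCondition.
Context {X : BanachAlg}.
Variables (lam : Cpx) (a b d ad dd : X).
Hypothesis lam_neq0 : lam <> C0.
Hypothesis a_gd : gdrazin_in X a ad.
Hypothesis d_gd : gdrazin_in X d dd.
Hypothesis b_d : mul b d = scal lam (mul (mul a b) (spec_idem X d dd)).

Lemma mul_skew_gdrazin_r : mul b dd = zero.
Proof.
  destruct d_gd as [Hcomm [Hidem _]].
  assert (Hbddd : mul (mul b d) dd = zero).
  { rewrite b_d, scal_mul_l, <- mul_assoc. unfold spec_idem.
    rewrite mul_add_l, mul_one_l, mul_opp_l, <- Hcomm, Hidem, add_opp_r, mul_zero_r.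
    apply scal_zero. }
  rewrite <- Hidem, Hcomm, !mul_assoc, Hbddd, !mul_zero_l. reflexivity.
Qed.

Lemma mul_skew_d : mul b d = scal lam (mul a b).
Proof.
  destruct d_gd as [Hcomm _].
  rewrite b_d at 1. unfold spec_idem.
  rewrite mul_add_r, mul_one_r, mul_opp_r, <- Hcomm, <- !mul_assoc, (mul_assoc b),
    mul_skew_gdrazin_r, mul_zero_l, mul_zero_r, opp_zero, add_zero_r.
  reflexivity.
Qed.

Lemma mul_skew_residual_d : mul b (drazin_residual d dd) = mul b d.
Proof.
  destruct d_gd as [Hcomm _]. unfold drazin_residual.
  rewrite mul_add_r, mul_opp_r, <- mul_assoc, <- Hcomm, (mul_assoc d dd d), <- Hcomm,
    !mul_assoc, mul_skew_gdrazin_r, !mul_zero_l, opp_zero.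
  apply add_zero_r.
Qed.

Lemma mul_skew_residual_apow n :
  mul b (apow (drazin_residual d dd) n) = siter lam n (mul (apow a n) b).
Proof.
  induction n as [|n IH]; simpl.
  - rewrite mul_one_r, mul_one_l. reflexivity.
  - rewrite mul_assoc, mul_skew_residual_d, mul_skew_d, scal_mul_l, <- mul_assoc, IH,
      siter_mul_r, mul_assoc.
    reflexivity.
Qed.

(* Iterating [b d^pi d = lam a b] gives [lam^n ad b = ad^(n+1) b (d d^pi)^n], and the
   right-hand side decays faster than every geometric sequence. *)
Lemma mul_gdrazin_skew_l : mul ad b = zero.
Proof.
  pose proof d_gd as [_ [_ Hqnil]]. apply quasinilE in Hqnil.
  set (r := Cmod lam). assert (Hr : 0 < r) by (apply Cmod_pos; exact lam_neq0).
  set (K := norm ad). set (z := norm (mul ad b)).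
  set (N := fun n => norm (apow (drazin_residual d dd) n)).
  assert (HK : 0 <= K) by apply norm_nonneg.
  assert (Hb : 0 <= norm b) by apply norm_nonneg.
  assert (Hz : 0 <= z) by apply norm_nonneg.
  assert (Hkey : forall n, r ^ n * z <= K ^ S n * norm b * N n).
  { intros n. unfold r, z, N. rewrite <- norm_siter.
    rewrite <- (gdrazin_apow_mul a ad n a_gd) at 1.
    rewrite <- mul_assoc, <- siter_mul_r, <- mul_skew_residual_apow, Rmult_assoc.
    eapply Rle_trans; [apply norm_submult |].
    apply Rmult_le_compat; [apply norm_nonneg | apply norm_nonneg | apply norm_apow |].
    apply norm_submult. }
  apply norm_eq0, subgeometric_const; [exact Hz |].
  apply (subgeometric_dominated _ N 0 (K * norm b) (K / r));
    [nra | apply Rmult_le_pos; [lra | apply Rlt_le, Rinv_0_lt_compat; lra]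
    | exact Hqnil |].
  intros n. simpl plus.
  assert (Hrn : 0 < r ^ n) by (apply pow_lt; exact Hr).
  apply Rmult_le_reg_l with (r ^ n); [exact Hrn |].
  replace (r ^ n * (K * norm b * (K / r) ^ n * N n)) with (K ^ S n * norm b * N n)
    by (unfold Rdiv; rewrite Rpow_mult_distr, pow_inv; simpl; field; lra).
  apply Hkey.
Qed.

Lemma mul_skew_residual :
  mul b (drazin_residual d dd) = scal lam (mul (drazin_residual a ad) b).
Proof.
  rewrite mul_skew_residual_d, mul_skew_d. unfold drazin_residual.
  rewrite mul_add_l, mul_opp_l, <- mul_assoc, mul_gdrazin_skew_l, mul_zero_r, opp_zero,
    add_zero_r.
  reflexivity.
Qed.

End IntertwiningCondition.

Arguments m11 {X}. Arguments m12 {X}. Arguments m21 {X}. Arguments m22 {X}.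
Arguments m2zero {X}.

Section MatrixAlgebra.
Context {X : BanachAlg}.
Implicit Types M N P : M2 X.

Definition m2scal (c : Cpx) M : M2 X :=
  mkM2 (scal c (m11 M)) (scal c (m12 M)) (scal c (m21 M)) (scal c (m22 M)).

Ltac m2_entries :=
  repeat match goal with M : M2 X |- _ => destruct M end;
  unfold m2add, m2opp, m2mul, m2scal, m2zero, m2one; simpl; f_equal.

Lemma add_add_swap (x y z w : X) : add (add x y) (add z w) = add (add x z) (add y w).
Proof.
  rewrite <- !add_assoc. f_equal. rewrite !add_assoc. f_equal. apply add_comm.
Qed.

Lemma m2add_assoc M N P : m2add M (m2add N P) = m2add (m2add M N) P.
Proof. m2_entries; apply add_assoc. Qed.
Lemma m2add_comm M N : m2add M N = m2add N M.
Proof. m2_entries; apply add_comm. Qed.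
Lemma m2add_zero_l M : m2add m2zero M = M.
Proof. m2_entries; apply add_zero_l. Qed.
Lemma m2add_opp_l M : m2add (m2opp M) M = m2zero.
Proof. m2_entries; apply add_opp_l. Qed.
Lemma m2mul_assoc M N P : m2mul M (m2mul N P) = m2mul (m2mul M N) P.
Proof. m2_entries; rewrite ?mul_add_l, ?mul_add_r, ?mul_assoc; apply add_add_swap. Qed.
Lemma m2mul_one_l M : m2mul m2one M = M.
Proof. m2_entries; rewrite mul_one_l, mul_zero_l; try apply add_zero_r; apply add_zero_l. Qed.
Lemma m2mul_one_r M : m2mul M m2one = M.
Proof. m2_entries; rewrite mul_one_r, mul_zero_r; try apply add_zero_r; apply add_zero_l. Qed.
Lemma m2mul_add_l M N P : m2mul (m2add M N) P = m2add (m2mul M P) (m2mul N P).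
Proof. m2_entries; rewrite !mul_add_l; apply add_add_swap. Qed.
Lemma m2mul_add_r M N P : m2mul M (m2add N P) = m2add (m2mul M N) (m2mul M P).
Proof. m2_entries; rewrite !mul_add_r; apply add_add_swap. Qed.
Lemma m2scal_add_c a b M : m2scal (Cadd a b) M = m2add (m2scal a M) (m2scal b M).
Proof. m2_entries; apply scal_add_c. Qed.
Lemma m2scal_add_x a M N : m2scal a (m2add M N) = m2add (m2scal a M) (m2scal a N).
Proof. m2_entries; apply scal_add_x. Qed.
Lemma m2scal_mul_c a b M : m2scal (Cmul a b) M = m2scal a (m2scal b M).
Proof. m2_entries; apply scal_mul_c. Qed.
(* [Reals] also exports a [C1], hence the qualified name. *)
Lemma m2scal_one M : m2scal Defs.C1 M = M.
Proof. m2_entries; apply scal_one. Qed.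
Lemma m2scal_mul_l a M N : m2mul (m2scal a M) N = m2scal a (m2mul M N).
Proof. m2_entries; rewrite !scal_mul_l; symmetry; apply scal_add_x. Qed.
Lemma m2scal_mul_r a M N : m2mul M (m2scal a N) = m2scal a (m2mul M N).
Proof. m2_entries; rewrite !scal_mul_r; symmetry; apply scal_add_x. Qed.

Lemma m2norm_nonneg M : 0 <= m2norm M.
Proof.
  unfold m2norm. pose proof (norm_nonneg (m11 M)). pose proof (norm_nonneg (m12 M)).
  pose proof (Rmax_l (norm (m11 M) + norm (m12 M)) (norm (m21 M) + norm (m22 M))). lra.
Qed.

Lemma m2norm_entries M :
  norm (m11 M) <= m2norm M /\ norm (m12 M) <= m2norm M /\
  norm (m21 M) <= m2norm M /\ norm (m22 M) <= m2norm M.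
Proof.
  unfold m2norm.
  pose proof (Rmax_l (norm (m11 M) + norm (m12 M)) (norm (m21 M) + norm (m22 M))).
  pose proof (Rmax_r (norm (m11 M) + norm (m12 M)) (norm (m21 M) + norm (m22 M))).
  pose proof (norm_nonneg (m11 M)); pose proof (norm_nonneg (m12 M)).
  pose proof (norm_nonneg (m21 M)); pose proof (norm_nonneg (m22 M)).
  repeat split; lra.
Qed.

Lemma m2norm_le_sum M :
  m2norm M <= norm (m11 M) + norm (m12 M) + norm (m21 M) + norm (m22 M).
Proof.
  unfold m2norm. pose proof (norm_nonneg (m11 M)); pose proof (norm_nonneg (m12 M)).
  pose proof (norm_nonneg (m21 M)); pose proof (norm_nonneg (m22 M)).
  apply Rmax_lub; lra.
Qed.

Lemma m2norm_eq0 M : m2norm M = 0 -> M = m2zero.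
Proof.
  intros H. destruct (m2norm_entries M) as [H1 [H2 [H3 H4]]].
  destruct M as [x y z w]; simpl in *. unfold m2zero. f_equal; apply norm_eq0;
    [pose proof (norm_nonneg x) | pose proof (norm_nonneg y)
    | pose proof (norm_nonneg z) | pose proof (norm_nonneg w)]; lra.
Qed.

Lemma m2norm_triangle M N : m2norm (m2add M N) <= m2norm M + m2norm N.
Proof.
  destruct M as [a b c d], N as [a' b' c' d']. unfold m2norm, m2add; simpl.
  pose proof (norm_triangle a a'); pose proof (norm_triangle b b').
  pose proof (norm_triangle c c'); pose proof (norm_triangle d d').
  pose proof (Rmax_l (norm a + norm b) (norm c + norm d)).
  pose proof (Rmax_r (norm a + norm b) (norm c + norm d)).
  pose proof (Rmax_l (norm a' + norm b') (norm c' + norm d')).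
  pose proof (Rmax_r (norm a' + norm b') (norm c' + norm d')).
  apply Rmax_lub; lra.
Qed.

Lemma m2norm_scal a M : m2norm (m2scal a M) = Cmod a * m2norm M.
Proof.
  destruct M as [x y z w]. unfold m2norm, m2scal; simpl. rewrite !norm_scal.
  rewrite <- RmaxRmult by apply Cmod_nonneg. f_equal; ring.
Qed.

Lemma m2norm_submult M N : m2norm (m2mul M N) <= m2norm M * m2norm N.
Proof.
  destruct (m2norm_entries N) as [Ha' [Hb' [Hc' Hd']]].
  pose proof (m2norm_nonneg N) as HN.
  destruct M as [a b c d], N as [a' b' c' d']. simpl in *.
  set (n := m2norm (mkM2 a' b' c' d')) in *. unfold m2norm at 1, m2mul; simpl.
  pose proof (norm_nonneg a); pose proof (norm_nonneg b).
  pose proof (norm_nonneg c); pose proof (norm_nonneg d).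
  assert (Hrow : forall x y : X,
    norm (add (mul x a') (mul y c')) + norm (add (mul x b') (mul y d'))
      <= (norm x + norm y) * n).
  { intros x y. pose proof (norm_nonneg x); pose proof (norm_nonneg y).
    pose proof (norm_triangle (mul x a') (mul y c')).
    pose proof (norm_triangle (mul x b') (mul y d')).
    pose proof (norm_submult x a'); pose proof (norm_submult y c').
    pose proof (norm_submult x b'); pose proof (norm_submult y d').
    unfold n, m2norm in *; simpl in *.
    pose proof (Rmax_l (norm a' + norm b') (norm c' + norm d')).
    pose proof (Rmax_r (norm a' + norm b') (norm c' + norm d')).
    set (mx := Rmax (norm a' + norm b') (norm c' + norm d')) in *. nra. }
  unfold m2norm; simpl.
  pose proof (Rmax_l (norm a + norm b) (norm c + norm d)).
  pose proof (Rmax_r (norm a + norm b) (norm c + norm d)).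
  apply Rmax_lub; [eapply Rle_trans; [apply Hrow |] ..]; apply Rmult_le_compat_r; lra.
Qed.

Lemma m2norm_one : m2norm (@m2one X) = 1.
Proof.
  unfold m2norm, m2one; simpl. rewrite norm_zero, norm_one, Rplus_0_r, Rplus_0_l.
  apply Rmax_left; lra.
Qed.

Lemma cauchy_entry (u : nat -> M2 X) (entry : M2 X -> X) :
  (forall M N, norm (add (entry M) (opp (entry N))) <= m2norm (m2add M (m2opp N))) ->
  (forall eps, eps > 0 -> exists K, forall n m, (n >= K)%nat -> (m >= K)%nat ->
     m2norm (m2add (u n) (m2opp (u m))) < eps) ->
  exists l, Un_cv (fun n => norm (add (entry (u n)) (opp l))) 0.
Proof.
  intros Hentry Hu. apply complete. intros eps Heps.
  destruct (Hu eps Heps) as [K HK]. exists K. intros n m Hn Hm.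
  eapply Rle_lt_trans; [apply Hentry | apply HK; assumption].
Qed.

Lemma m2_complete (u : nat -> M2 X) :
  (forall eps, eps > 0 -> exists K, forall n m, (n >= K)%nat -> (m >= K)%nat ->
     m2norm (m2add (u n) (m2opp (u m))) < eps) ->
  exists l, Un_cv (fun n => m2norm (m2add (u n) (m2opp l))) 0.
Proof.
  intros Hu.
  destruct (cauchy_entry u m11) as [l11 H11];
    [intros; apply (m2norm_entries (m2add M (m2opp N))) | exact Hu |].
  destruct (cauchy_entry u m12) as [l12 H12];
    [intros; apply (m2norm_entries (m2add M (m2opp N))) | exact Hu |].
  destruct (cauchy_entry u m21) as [l21 H21];
    [intros; apply (m2norm_entries (m2add M (m2opp N))) | exact Hu |].
  destruct (cauchy_entry u m22) as [l22 H22];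
    [intros; apply (m2norm_entries (m2add M (m2opp N))) | exact Hu |].
  exists (mkM2 l11 l12 l21 l22). intros eps Heps.
  destruct (H11 (eps / 4) ltac:(lra)) as [N11 HN11].
  destruct (H12 (eps / 4) ltac:(lra)) as [N12 HN12].
  destruct (H21 (eps / 4) ltac:(lra)) as [N21 HN21].
  destruct (H22 (eps / 4) ltac:(lra)) as [N22 HN22].
  exists (max (max N11 N12) (max N21 N22)). intros n Hn. unfold R_dist in *.
  specialize (HN11 n ltac:(lia)); specialize (HN12 n ltac:(lia)).
  specialize (HN21 n ltac:(lia)); specialize (HN22 n ltac:(lia)).
  rewrite Rminus_0_r in *. rewrite Rabs_pos_eq in * by apply norm_nonneg.
  rewrite Rabs_pos_eq by apply m2norm_nonneg.
  eapply Rle_lt_trans; [apply m2norm_le_sum |]. simpl. lra.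
Qed.

End MatrixAlgebra.

Definition M2_BanachAlg (X : BanachAlg) : BanachAlg := {|
  carrier := M2 X;
  zero := m2zero; one := m2one; add := m2add; opp := m2opp; mul := m2mul;
  scal := m2scal; norm := m2norm;
  add_assoc := m2add_assoc; add_comm := m2add_comm; add_zero_l := m2add_zero_l;
  add_opp_l := m2add_opp_l; mul_assoc := m2mul_assoc; mul_one_l := m2mul_one_l;
  mul_one_r := m2mul_one_r; mul_add_l := m2mul_add_l; mul_add_r := m2mul_add_r;
  scal_add_c := m2scal_add_c; scal_add_x := m2scal_add_x; scal_mul_c := m2scal_mul_c;
  scal_one := m2scal_one; scal_mul_l := m2scal_mul_l; scal_mul_r := m2scal_mul_r;
  norm_nonneg := m2norm_nonneg; norm_eq0 := m2norm_eq0;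
  norm_triangle := m2norm_triangle; norm_scal := m2norm_scal;
  norm_submult := m2norm_submult; norm_one := m2norm_one; complete := m2_complete |}.

Section Blocks.
Context {X : BanachAlg}.
Local Notation M2A := (M2_BanachAlg X).

Definition m2diag (a d : X) : M2A := mkM2 a zero zero d.
Definition m2antidiag (b c : X) : M2A := mkM2 zero b c zero.

Lemma mul_m2diag (a d a' d' : X) :
  mul (m2diag a d) (m2diag a' d') = m2diag (mul a a') (mul d d').
Proof.
  cbn; unfold m2mul, m2diag; simpl. f_equal;
    rewrite ?mul_zero_l, ?mul_zero_r, ?add_zero_l, ?add_zero_r; reflexivity.
Qed.

Lemma mul_m2diag_antidiag (a d b c : X) :
  mul (m2diag a d) (m2antidiag b c) = m2antidiag (mul a b) (mul d c).
Proof.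
  cbn; unfold m2mul, m2diag, m2antidiag; simpl. f_equal;
    rewrite ?mul_zero_l, ?mul_zero_r, ?add_zero_l, ?add_zero_r; reflexivity.
Qed.

Lemma mul_m2antidiag_diag (b c a d : X) :
  mul (m2antidiag b c) (m2diag a d) = m2antidiag (mul b d) (mul c a).
Proof.
  cbn; unfold m2mul, m2diag, m2antidiag; simpl. f_equal;
    rewrite ?mul_zero_l, ?mul_zero_r, ?add_zero_l, ?add_zero_r; reflexivity.
Qed.

Lemma mul_m2antidiag (b c b' c' : X) :
  mul (m2antidiag b c) (m2antidiag b' c') = m2diag (mul b c') (mul c b').
Proof.
  cbn; unfold m2mul, m2diag, m2antidiag; simpl. f_equal;
    rewrite ?mul_zero_l, ?mul_zero_r, ?add_zero_l, ?add_zero_r; reflexivity.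
Qed.

Lemma apow_m2diag (a d : X) n : apow (m2diag a d) n = m2diag (apow a n) (apow d n).
Proof. induction n as [|n IH]; [reflexivity |]. cbn [gpow]. rewrite IH. apply mul_m2diag. Qed.

Lemma norm_m2diag (a d : X) : norm (m2diag a d) = Rmax (norm a) (norm d).
Proof. cbn; unfold m2norm; simpl. rewrite norm_zero, Rplus_0_r, Rplus_0_l. reflexivity. Qed.

Lemma drazin_residual_m2diag (a ad d dd : X) :
  drazin_residual (m2diag a d) (m2diag ad dd) =
  m2diag (drazin_residual a ad) (drazin_residual d dd).
Proof.
  unfold drazin_residual. rewrite !mul_m2diag.
  cbn; unfold m2add, m2opp, m2diag; simpl. rewrite opp_zero, add_zero_l. reflexivity.
Qed.

Lemma gdrazin_m2diag (a ad d dd : X) :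
  gdrazin_in X a ad -> gdrazin_in X d dd -> gdrazin_in M2A (m2diag a d) (m2diag ad dd).
Proof.
  intros [Hac [Hai Haq]] [Hdc [Hdi Hdq]].
  split; [| split].
  - rewrite !mul_m2diag, Hac, Hdc. reflexivity.
  - rewrite !mul_m2diag, Hai, Hdi. reflexivity.
  - change (quasinil mul one norm (drazin_residual (m2diag a d) (m2diag ad dd))).
    rewrite drazin_residual_m2diag. apply quasinilE.
    apply quasinilE in Haq, Hdq.
    eapply subgeometric_Rmax in Hdq; [| exact Haq].
    intros e He. destruct (Hdq e He) as [N HN]. exists N. intros n Hn.
    rewrite apow_m2diag, norm_m2diag. apply HN, Hn.
Qed.

Lemma m2_series_zero (u : nat -> M2 X) : (forall n, u n = m2zero) -> m2_series u m2zero.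
Proof.
  intros Hu eps Heps. exists O. intros n _.
  assert (Hpartial : m2partial X u n = m2zero).
  { induction n as [|n IH]; simpl; [apply Hu |]. rewrite IH, Hu. apply m2add_zero_l. }
  unfold R_dist. rewrite Hpartial.
  change (Rabs (@norm M2A (add zero (opp zero)) - 0) < eps).
  rewrite add_opp_r, norm_zero, Rminus_0_r, Rabs_R0. exact Heps.
Qed.

End Blocks.

Theorem corollary3p2 (X : BanachAlg) (lam : Cpx) (A B C D Ad Dd : X) :
  lam <> C0 ->
  gdrazin_in X A Ad ->
  gdrazin_in X D Dd ->
  mul B D = scal lam (mul (mul A B) (spec_idem X D Dd)) ->
  mul C A = scal lam (mul (mul D C) (spec_idem X A Ad)) ->
  mul B C = zero ->
  let M := mkM2 A B C D in
  let Pd := mkM2 Ad zero zero Dd in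
  let Q := mkM2 zero B C zero in
  exists S : M2 X,
    m2_series (fun n => m2mul (m2mul (m2pow Pd (n + 2)) Q) (m2pow M n)) S /\
    m2_gdrazin M (m2add Pd S).
Proof.
  intros Hlam HA HD HBD HCA HBC M Pd Q.
  pose proof (mul_skew_gdrazin_r lam A B D Dd HD HBD) as BDd.
  pose proof (mul_skew_gdrazin_r lam D C A Ad HA HCA) as CAd.
  pose proof (mul_gdrazin_skew_l lam A B D Ad Dd Hlam HA HD HBD) as AdB.
  pose proof (mul_gdrazin_skew_l lam D C A Dd Ad Hlam HD HA HCA) as DdC.
  pose proof (mul_skew_residual lam A B D Ad Dd Hlam HA HD HBD) as skewB.
  pose proof (mul_skew_residual lam D C A Dd Ad Hlam HD HA HCA) as skewC.
  assert (PdQ : mul (m2diag Ad Dd) (m2antidiag B C) = zero)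
    by (rewrite mul_m2diag_antidiag, AdB, DdC; reflexivity).
  exists m2zero. split.
  - apply m2_series_zero. intros n.
    change (mul (mul (apow (m2diag Ad Dd) (n + 2)) (m2antidiag B C))
      (apow (M : M2_BanachAlg X) n) = zero).
    rewrite Nat.add_succ_r, apow_succ_r, <- (mul_assoc _ (m2diag Ad Dd)), PdQ, mul_zero_r.
    apply mul_zero_l.
  - change (gdrazin_in (M2_BanachAlg X) (M : M2_BanachAlg X) (add (m2diag Ad Dd) zero)).
    replace M with (add (m2diag A D) (m2antidiag B C))
      by (cbn; unfold m2add; simpl; rewrite !add_zero_l, !add_zero_r; reflexivity).
    rewrite add_zero_r. apply (gdrazin_add_skew _ _ _ lam).
    + apply gdrazin_m2diag; assumption.
    + exact PdQ.
    + rewrite mul_m2antidiag_diag, BDd, CAd. reflexivity.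
    + rewrite drazin_residual_m2diag, mul_m2antidiag_diag, mul_m2diag_antidiag, skewB, skewC.
      cbn; unfold m2scal; simpl. rewrite scal_zero. reflexivity.
    + rewrite mul_m2antidiag, mul_m2antidiag_diag, (mul_assoc B C B), HBC, mul_zero_l,
        mul_zero_r.
      reflexivity.
Qed.
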